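(* Let $K, d, D_{out}, N_H$ be positive integers with $N_H<\min\{K^2,d\}$, and let $H,W\ge K$. Then there exists a convolution kernel $\boldsymbol W^C$ (indexed by $\Delta\times[d]\times[D_{out}]$) such that no multi-head self-attention layer with relative positional encoding, $N_H$ heads, any head dimension $d_H$ and output dimension $D_{out}$, in the pixel-input setting, expresses $\mathrm{conv}(\cdot;\boldsymbol W^C)$ in the sense defined in the context.
   Context: Pixel-input setting: an image $\boldsymbol X\in\mathbb{R}^{H\times W\times d}$ is fed as a sequence of $N=HW$ tokens, one per pixel $\gamma\in[H]\times[W]$, with feature $\boldsymbol X_{\gamma,:}\in\mathbb{R}^d$. Convolution: $\Delta=\{-\lfloor K/2\rfloor,\dots,\lfloor K/2\rfloor\}^2$, kernel blocks $\boldsymbol W^C_{\delta,:,:}\in\mathbb{R}^{d\times D_{out}}$ for $\delta\in\Delta$, $\mathrm{conv}(\boldsymbol X)_{\gamma,:}=\sum_{\delta\in\Delta}\boldsymbol X_{\gamma+\delta,:}\boldsymbol W^C_{\delta,:,:}$, defined at pixels $\gamma$ with $\gamma+\delta\in[H]\times[W]$ for all $\delta\in\Delta$. MHSA layer with relative positional encoding (no bias terms): for head $k\in[N_H]$, matrices $\boldsymbol W^Q_k,\boldsymbol W^K_k,\boldsymbol W^V_k\in\mathbb{R}^{d\times d_H}$, $\boldsymbol W^O_k\in\mathbb{R}^{d_H\times D_{out}}$ and scalars $b^{(k)}_{u}$ for $u\in\mathbb{Z}^2$, $|u_1|\le H-1$, $|u_2|\le W-1$; $\boldsymbol B^{(k)}_{\gamma,\gamma'}=b^{(k)}_{\gamma-\gamma'}$;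 for $\boldsymbol Z\in\mathbb{R}^{N\times d}$, $\mathrm{SA}_k(\boldsymbol Z)=\mathrm{softmax}(\boldsymbol Z\boldsymbol W^Q_k(\boldsymbol Z\boldsymbol W^K_k)^\top/\sqrt d+\boldsymbol B^{(k)})\boldsymbol Z\boldsymbol W^V_k$ (row-wise softmax) and $\mathrm{MHSA}(\boldsymbol Z)=\sum_{k=1}^{N_H}\mathrm{SA}_k(\boldsymbol Z)\boldsymbol W^O_k$. Expressing: a layer expresses $\mathrm{conv}(\cdot;\boldsymbol W^C)$ if for every $\boldsymbol X\in\mathbb{R}^{H\times W\times d}$ and every pixel $\gamma$ at which the convolution is defined, $\mathrm{MHSA}(\boldsymbol X)_{\gamma,:}=\mathrm{conv}(\boldsymbol X)_{\gamma,:}$. *)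

From HB Require Import structures.
From mathcomp Require Import all_boot all_order all_algebra.
From mathcomp Require Import reals sequences exp.
Set Implicit Arguments. Unset Strict Implicit. Unset Printing Implicit Defensive.
Import Order.TTheory GRing.Theory Num.Theory.
Local Open Scope ring_scope.

Section Defs.
Variables (R : realType) (H W d : nat).

(* pixels gamma in [H] x [W]; an image X in R^{H x W x d} is the map
   gamma |-> X_{gamma,:} in R^d (a row vector). *)
Definition pixel := ('I_H * 'I_W)%type.
Definition image := pixel -> 'rV[R]_d.

(* the feature of X at integer coordinates (i, j); zero outside the grid
   (only ever used where the convolution is defined, i.e. inside the grid) *)
Definition feat_at (X : image) (i j : int) : 'rV[R]_d :=
  match @insub nat (fun n => n < H)%N 'I_H `|i|%N,
        @insub nat (fun n => n < W)%N 'I_W `|j|%N with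
  | Some a, Some b => if (0 <= i) && (0 <= j) then X (a, b) else 0
  | _, _ => 0
  end.

(* Offsets: Delta = {-floor(K/2),...,floor(K/2)}^2; for odd K this is in
   bijection with 'I_K * 'I_K via  i |-> i - floor(K/2). *)
Definition offset (K : nat) (i : 'I_K) : int := (i%:Z - (K./2)%:Z)%R.

Definition conv_defined (K : nat) (g : pixel) : Prop :=
  forall dl : 'I_K * 'I_K,
    (0 <= (g.1)%:Z + offset dl.1 < H%:Z) /\ (0 <= (g.2)%:Z + offset dl.2 < W%:Z).

Definition conv (K Dout : nat) (WC : 'I_K * 'I_K -> 'M[R]_(d, Dout))
    (X : image) (g : pixel) : 'rV[R]_Dout :=
  \sum_(dl : 'I_K * 'I_K)
     feat_at X ((g.1)%:Z + offset dl.1) ((g.2)%:Z + offset dl.2) *m WC dl.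

Definition att_logit (dH : nat) (WQ WK : 'M[R]_(d, dH)) (b : int -> int -> R)
    (Z : image) (g g' : pixel) : R :=
  ((Z g *m WQ) *m (Z g' *m WK)^T) ord0 ord0 / Num.sqrt (d%:R)
  + b ((g.1)%:Z - (g'.1)%:Z) ((g.2)%:Z - (g'.2)%:Z).

Definition softmax_row (s : pixel -> R) (g' : pixel) : R :=
  expR (s g') / \sum_(g'' : pixel) expR (s g'').

Definition self_att (dH : nat) (WQ WK WV : 'M[R]_(d, dH)) (b : int -> int -> R)
    (Z : image) (g : pixel) : 'rV[R]_dH :=
  \sum_(g' : pixel) softmax_row (att_logit WQ WK b Z g) g' *: (Z g' *m WV).

Definition mhsa (NH dH Dout : nat) (WQ WK WV : 'I_NH -> 'M[R]_(d, dH))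
    (WO : 'I_NH -> 'M[R]_(dH, Dout)) (b : 'I_NH -> int -> int -> R)
    (Z : image) (g : pixel) : 'rV[R]_Dout :=
  \sum_(k < NH) self_att (WQ k) (WK k) (WV k) (b k) Z g *m WO k.

Definition expresses (NH dH K Dout : nat) (WQ WK WV : 'I_NH -> 'M[R]_(d, dH))
    (WO : 'I_NH -> 'M[R]_(dH, Dout)) (b : 'I_NH -> int -> int -> R)
    (WC : 'I_K * 'I_K -> 'M[R]_(d, Dout)) : Prop :=
  forall (X : image) (g : pixel), conv_defined K g ->
    mhsa WQ WK WV WO b X g = conv WC X g.

End Defs.

From Pilot Require Import Defs.
From HB Require Import structures.
From mathcomp Require Import all_boot all_order all_algebra all_fingroup.
From mathcomp Require Import reals sequences exp.
Import Order.TTheory GRing.Theory Num.Theory.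
Set Implicit Arguments. Unset Strict Implicit. Unset Printing Implicit Defensive.
Local Open Scope ring_scope.

(* Fix NH + 1 distinct offsets p_0 = centre, p_1, ..., p_NH and NH + 1 input
   channels c_0, ..., c_NH, and take the kernel whose only taps send channel c_i
   at offset p_i to one output channel o.  Evaluate at the pixel g0 sitting at
   offset zero of a K x K window, on images supported on a single pixel.  When
   that pixel is g0 + p_j with j > 0, the token at g0 is zero, so every head
   attends with weights fixed by the positional bias alone, and the basis row
   e_(c_j) becomes a combination, with image-independent coefficients, of the
   NH head rows a_k := column o of WV k *m WO k.  NH independent vectors in the
   span of NH vectors span all of it, so each a_k is a combination of the
   e_(c_j), j > 0, and its c_0 entry vanishes.  Yet the image e_(c_0) placed at
   g0 itself must produce 1 in channel o, whereas the layer can only produce a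
   combination of these vanishing entries. *)

Section RowFree.
Variable F : fieldType.

Lemma row_free_rowsub1 m n (f : 'I_m -> 'I_n) :
  injective f -> row_free (rowsub f 1%:M : 'M[F]_(m, n)).
Proof.
move=> f_inj; apply/row_freeP; exists (rowsub f 1%:M)^T.
by apply/matrixP => i i'; rewrite -rowsubE !mxE (inj_eq f_inj) eq_sym.
Qed.

Lemma row_free_mulmx_sub n m (C : 'M[F]_n) (A : 'M[F]_(n, m)) :
  row_free (C *m A) -> (A <= C *m A)%MS.
Proof.
move=> /eqP rkCA; have [_ <-] := mxrank_leqif_sup (submxMl C A).
by rewrite eqn_leq mxrankM_maxr rkCA rank_leq_row.
Qed.

Lemma row_free_mulmx_col_eq0 n m (C : 'M[F]_n) (A : 'M[F]_(n, m)) r :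
  row_free (C *m A) -> col r (C *m A) = 0 -> col r A = 0.
Proof.
move=> /row_free_mulmx_sub /submxP[D defA] CA0.
by rewrite defA colE -mulmxA -colE CA0 mulmx0.
Qed.

End RowFree.

Lemma exists_inj_ord_at (T : finType) n (t : T) :
  (n < #|T|)%N -> {f : 'I_n.+1 -> T | injective f & f ord0 = t}.
Proof.
move=> ltnT; pose e (i : 'I_n.+1) : T := enum_val (widen_ord ltnT i).
exists (fun i => tperm (e ord0) t (e i)); last exact: tpermL.
move=> i j /perm_inj /enum_val_inj /(congr1 val) ij; exact: val_inj.
Qed.

Section PointImage.
Variables (R : realType) (H W d : nat).
Implicit Types (p g : pixel H W) (x : 'rV[R]_d) (b : int -> int -> R).

Definition point_image p x : Defs.image R H W d := fun q => if q == p then x else 0.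

Definition bias_logit b g (g' : pixel H W) : R :=
  b ((g.1)%:Z - (g'.1)%:Z) ((g.2)%:Z - (g'.2)%:Z).

Lemma eq_softmax_row (s s' : pixel H W -> R) :
  s =1 s' -> softmax_row s =1 softmax_row s'.
Proof.
by move=> ss' g; rewrite /softmax_row ss' (eq_bigr _ (fun g' _ => congr1 _ (ss' g'))).
Qed.

Lemma att_logit_zero_query dH (WQ WK : 'M[R]_(d, dH)) b (Z : Defs.image R H W d) g :
  Z g = 0 -> att_logit WQ WK b Z g =1 bias_logit b g.
Proof. by move=> Zg0 g'; rewrite /att_logit Zg0 !mul0mx mxE mul0r add0r. Qed.

Variables (NH dH Dout : nat) (WQ WK WV : 'I_NH -> 'M[R]_(d, dH)).
Variables (WO : 'I_NH -> 'M[R]_(dH, Dout)) (b : 'I_NH -> int -> int -> R).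

Lemma mhsa_point_image p x g :
  mhsa WQ WK WV WO b (point_image p x) g =
  \sum_k softmax_row (att_logit (WQ k) (WK k) (b k) (point_image p x) g) p
          *: (x *m (WV k *m WO k)).
Proof.
apply: eq_bigr => k _; rewrite /self_att (bigD1 p) //= big1 ?addr0.
  by rewrite /point_image eqxx -scalemxAl mulmxA.
by move=> q /negbTE qp; rewrite /point_image qp mul0mx scaler0.
Qed.

Lemma mhsa_point_image_off p x g : p != g ->
  mhsa WQ WK WV WO b (point_image p x) g =
  x *m \sum_k softmax_row (bias_logit (b k) g) p *: (WV k *m WO k).
Proof.
move=> pg; have x0 : point_image p x g = 0 by rewrite /point_image eq_sym (negbTE pg).
rewrite mhsa_point_image mulmx_sumr; apply: eq_bigr => k _.
by rewrite (eq_softmax_row (att_logit_zero_query (WQ k) (WK k) (b k) x0)) scalemxAr.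
Qed.

End PointImage.

Lemma feat_at_nat (R : realType) H W d (X : Defs.image R H W d) n m
    (ltnH : (n < H)%N) (ltmW : (m < W)%N) :
  feat_at X n m = X (Ordinal ltnH, Ordinal ltmW).
Proof.
by rewrite /feat_at (insubT (fun k => k < H)%N ltnH) (insubT (fun k => k < W)%N ltmW).
Qed.

Lemma half_add_offset K (i : 'I_K) : (K./2)%:Z + offset i = i%:Z.
Proof. by rewrite /offset addrC subrK. Qed.

Section CentredConvolution.
Variables (R : realType) (H W d K : nat).
Hypotheses (K_gt0 : (0 < K)%N) (KH : (K <= H)%N) (KW : (K <= W)%N).

Lemma half_ltn : (K./2 < K)%N.
Proof. by rewrite ltn_half_double -addnn -addn1 leq_add2l. Qed.

Definition centre : 'I_K * 'I_K := (Ordinal half_ltn, Ordinal half_ltn).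

Definition pixel_of_offset (dl : 'I_K * 'I_K) : pixel H W :=
  (widen_ord KH dl.1, widen_ord KW dl.2).

Lemma pixel_of_offset_inj : injective pixel_of_offset.
Proof. by move=> [i j] [i' j'] [/val_inj/= -> /val_inj/= ->]. Qed.

Lemma feat_at_centre_offset (X : Defs.image R H W d) dl :
  feat_at X ((pixel_of_offset centre).1%:Z + offset dl.1)
            ((pixel_of_offset centre).2%:Z + offset dl.2)
  = X (pixel_of_offset dl).
Proof.
rewrite !half_add_offset.
rewrite (feat_at_nat _ (leq_trans (ltn_ord _) KH) (leq_trans (ltn_ord _) KW)).
by congr X; congr pair; apply: val_inj.
Qed.

Lemma conv_defined_centre : conv_defined K (pixel_of_offset centre).
Proof.
move=> dl; rewrite !half_add_offset !ltz_nat.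
by split; apply: leq_trans (ltn_ord _) _.
Qed.

Lemma conv_point_image_centre Dout (WC : 'I_K * 'I_K -> 'M[R]_(d, Dout)) dl x :
  conv WC (point_image (pixel_of_offset dl) x) (pixel_of_offset centre) = x *m WC dl.
Proof.
rewrite /conv (bigD1 dl) //= big1 ?addr0 => [|dl' dl'dl];
  rewrite feat_at_centre_offset /point_image ?eqxx //.
by rewrite (inj_eq pixel_of_offset_inj) (negbTE dl'dl) mul0mx.
Qed.

End CentredConvolution.

Section ShiftKernel.
Variables (R : realType) (H W K d Dout NH : nat).
Hypotheses (K_gt0 : (0 < K)%N) (KH : (K <= H)%N) (KW : (K <= W)%N).
Variables (pos : 'I_NH.+1 -> 'I_K * 'I_K) (chan : 'I_NH.+1 -> 'I_d) (o : 'I_Dout).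
Hypotheses (pos_inj : injective pos) (pos0 : pos ord0 = centre K_gt0).
Hypothesis chan_inj : injective chan.

Definition shift_kernel (dl : 'I_K * 'I_K) : 'M[R]_(d, Dout) :=
  \sum_(i | pos i == dl) delta_mx (chan i) o.

Lemma shift_kernelE i : shift_kernel (pos i) = delta_mx (chan i) o.
Proof.
by rewrite /shift_kernel (big_pred1 i) // => j; rewrite /= (inj_eq pos_inj).
Qed.

Variables (dH : nat) (WQ WK WV : 'I_NH -> 'M[R]_(d, dH)).
Variables (WO : 'I_NH -> 'M[R]_(dH, Dout)) (b : 'I_NH -> int -> int -> R).

Let pix := pixel_of_offset KH KW.
Let g0 := pix (centre K_gt0).
Let conv_g0 := conv_defined_centre K_gt0 KH KW.

Lemma expresses_shift_kernel_head_eq0 :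
  expresses H W WQ WK WV WO b shift_kernel ->
  forall k, (WV k *m WO k) (chan ord0) o = 0.
Proof.
move=> expr.
have pix_inj : injective pix by apply: pixel_of_offset_inj.
pose A : 'M[R]_(NH, d) := \matrix_(k, r) (WV k *m WO k) r o.
pose C : 'M[R]_NH :=
  \matrix_(j, k) softmax_row (bias_logit (b k) g0) (pix (pos (lift ord0 j))).
have CA : C *m A = rowsub (chan \o lift ord0) 1%:M.
  apply/matrixP => j r.
  have off_g0 : pix (pos (lift ord0 j)) != g0.
    by rewrite (inj_eq pix_inj) -pos0 (inj_eq pos_inj) eq_sym neq_lift.
  have := congr1 (fun v : 'rV_Dout => v 0 o)
    (expr (point_image (pix (pos (lift ord0 j))) (delta_mx 0 r)) g0 conv_g0).
  rewrite mhsa_point_image_off // conv_point_image_centre shift_kernelE.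
  rewrite -!rowE !mxE summxE eqxx andbT eq_sym => <-.
  by apply: eq_bigr => k _; rewrite !mxE.
have A_chan0 : col (chan ord0) A = 0.
  apply: (row_free_mulmx_col_eq0 (C := C)); rewrite CA.
    exact/row_free_rowsub1/inj_comp/lift_inj.
  apply/matrixP => j i.
  by rewrite !mxE (inj_eq chan_inj) eq_sym (negbTE (neq_lift _ _)).
by move=> k; have := congr1 (fun v : 'cV_NH => v k 0) A_chan0; rewrite !mxE.
Qed.

Lemma shift_kernel_not_expressed : ~ expresses H W WQ WK WV WO b shift_kernel.
Proof.
move=> expr; have head_eq0 := expresses_shift_kernel_head_eq0 expr.
have := congr1 (fun v : 'rV_Dout => v 0 o)
  (expr (point_image (pix (pos ord0)) (delta_mx 0 (chan ord0))) g0 conv_g0).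
rewrite conv_point_image_centre shift_kernelE mhsa_point_image mul_delta_mx.
rewrite mxE summxE big1 => [|k _]; last by rewrite mxE -rowE mxE head_eq0 mulr0.
by rewrite !eqxx => /eqP; rewrite eq_sym oner_eq0.
Qed.

End ShiftKernel.

Theorem theorem2 (R : realType) (K d Dout NH H W : nat) :
  (0 < K)%N -> (0 < d)%N -> (0 < Dout)%N -> (0 < NH)%N -> odd K ->
  (NH < minn (K ^ 2) d)%N -> (K <= H)%N -> (K <= W)%N ->
  exists WC : 'I_K * 'I_K -> 'M[R]_(d, Dout),
    forall (dH : nat), (0 < dH)%N ->
    forall (WQ WK WV : 'I_NH -> 'M[R]_(d, dH))
           (WO : 'I_NH -> 'M[R]_(dH, Dout))
           (b : 'I_NH -> int -> int -> R),
      ~ @expresses R H W d NH dH K Dout WQ WK WV WO b WC.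
Proof.
move=> K_gt0 _ Dout_gt0 _ _; rewrite leq_min => /andP[NH_lt_K2 NH_lt_d] KH KW.
have NH_lt_offsets : (NH < #|{: 'I_K * 'I_K}|)%N.
  by rewrite card_prod card_ord mulnn.
have [pos pos_inj pos0] := exists_inj_ord_at (centre K_gt0) NH_lt_offsets.
have chan_inj : injective (widen_ord NH_lt_d) by move=> i j [] /val_inj.
pose o := Ordinal Dout_gt0.
exists (shift_kernel R pos (widen_ord NH_lt_d) o) => dH _ WQ WK WV WO b.
exact: (shift_kernel_not_expressed (R := R) (o := o) KH KW pos_inj pos0 chan_inj).
Qed.
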